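(* Let $X=\bigsqcup_{\lambda\in\Lambda}G_\lambda$ be an MCQ, $R$ a ring, $M$ a left $R$-module, and let $(f_1,f_2,f_3,f_4;\phi_1,\phi_2)$ be a 6-tuple of maps ($f_1,f_2:X\times X\to R$, $f_3,f_4:\bigsqcup_\lambda(G_\lambda\times G_\lambda)\to R$, $\phi_1:X\times X\to M$, $\phi_2:\bigsqcup_\lambda(G_\lambda\times G_\lambda)\to M$) satisfying conditions (0-i)–(4-$\phi$). Define $g_1,g_2:X\times X\to R$, $g_3,g_4:\bigsqcup_\lambda(G_\lambda\times G_\lambda)\to R$, $\psi_1:X\times X\to M$, $\psi_2:\bigsqcup_\lambda(G_\lambda\times G_\lambda)\to M$ by $g_1(x,y)=f_1(e_x,y)$, $g_2(x,y)=f_3(x\triangleleft y,\,x^{-1}\triangleleft y)\,f_2(x,y)\,f_3(e_y,y)$, $g_3(a,b)=1$, $g_4(a,b)=f_1(e_a,a^{-1})$, $\psi_1(x,y)=f_3(x\triangleleft y,\,x^{-1}\triangleleft y)\,\phi_1(x,y)$, $\psi_2(a,b)=f_3(ab,\,b^{-1}a^{-1})\,\phi_2(a,b)$. Then the 6-tuple $(g_1,g_2,g_3,g_4;\psi_1,\psi_2)$ also satisfies conditions (0-i)–(4-$\phi$).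
   Context: A multiple conjugation quandle (MCQ) is a set $X=\bigsqcup_{\lambda\in\Lambda}G_\lambda$ that is a disjoint union of groups $G_\lambda$, together with a binary operation $\triangleleft:X\times X\to X$ such that: (i) for all $a,b\in G_\lambda$, $a\triangleleft b=b^{-1}ab$; (ii) for all $x\in X$ and $a,b\in G_\lambda$, $x\triangleleft e_\lambda=x$ and $x\triangleleft(ab)=(x\triangleleft a)\triangleleft b$, where $e_\lambda$ is the identity of $G_\lambda$; (iii) for all $x,y,z\in X$, $(x\triangleleft y)\triangleleft z=(x\triangleleft z)\triangleleft(y\triangleleft z)$; (iv) for all $x\in X$ and $a,b\in G_\lambda$, the elements $a\triangleleft x$ and $b\triangleleft x$ lie in a common group $G_\mu$ and $(ab)\triangleleft x=(a\triangleleft x)(b\triangleleft x)$. For $x\in X$, $G_x$ denotes the group containing $x$, $e_x$ its identity, $x^{-1}$ the inverse of $x$ in $G_x$. $\bigsqcup_{\lambda}(G_\lambda\times G_\lambda)$ is the set of pairs of elements lying in a common group $G_\lambda$. Rings have a multiplicative identity $1\neq0$ and need not be commutative. Conditions (0-i)–(4-$\phi$) on a 6-tuple $(f_1,f_2,f_3,f_4;\phi_1,\phi_2)$: For all $\lambda$ and $a,b,c\in G_\lambda$: (0-i) $f_3(a,b)$, $f_4(a,b)$ invertible; (0-ii) $f_3(ab,c)f_3(a,b)=f_3(a,bc)$; (0-iii) $f_3(ab,c)f_4(a,b)=f_4(a,bc)f_3(b,c)$; (0-iv) $f_4(ab,c)=f_4(a,bc)f_4(b,c)$; (0-$\phi$)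 $f_3(ab,c)\phi_2(a,b)+\phi_2(ab,c)=f_4(a,bc)\phi_2(b,c)+\phi_2(a,bc)$. For all $a,b\in G_\lambda$: (1-i) $f_1(a,b)=f_4(b^{-1},ab)f_3(a,b)$; (1-ii) $f_3(b,b^{-1}ab)+f_4(b,b^{-1}ab)f_2(a,b)=f_4(a,b)$; (1-$\phi$) $f_4(b,b^{-1}ab)\phi_1(a,b)+\phi_2(b,b^{-1}ab)=\phi_2(a,b)$. For all $x\in X$, $a,b\in G_\lambda$: (2-i) $f_1(x,e_\lambda)=1$; (2-ii) $f_1(x,ab)=f_1(x\triangleleft a,b)f_1(x,a)$; (2-iii) $f_2(x,ab)f_3(a,b)=f_1(x\triangleleft a,b)f_2(x,a)$; (2-iv) $f_2(x,ab)f_4(a,b)=f_2(x\triangleleft a,b)$; (2-$\phi$i) $f_2(x,e_\lambda)\phi_2(e_\lambda,e_\lambda)=\phi_1(x,e_\lambda)$; (2-$\phi$ii) $f_2(x,ab)\phi_2(a,b)+\phi_1(x,ab)=f_1(x\triangleleft a,b)\phi_1(x,a)+\phi_1(x\triangleleft a,b)$. For all $x,y,z\in X$: (3-i) $f_1(x\triangleleft y,z)f_1(x,y)=f_1(x\triangleleft z,y\triangleleft z)f_1(x,z)$; (3-ii) $f_1(x\triangleleft y,z)f_2(x,y)=f_2(x\triangleleft z,y\triangleleft z)f_1(y,z)$; (3-iii) $f_2(x\triangleleft y,z)=f_1(x\triangleleft z,y\triangleleft z)f_2(x,z)+f_2(x\triangleleft z,y\triangleleft z)f_2(y,z)$; (3-$\phi$)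 $f_1(x\triangleleft y,z)\phi_1(x,y)+\phi_1(x\triangleleft y,z)=f_1(x\triangleleft z,y\triangleleft z)\phi_1(x,z)+f_2(x\triangleleft z,y\triangleleft z)\phi_1(y,z)+\phi_1(x\triangleleft z,y\triangleleft z)$. For all $a,b\in G_\lambda$, $x\in X$: (4-i) $f_1(ab,x)f_3(a,b)=f_3(a\triangleleft x,b\triangleleft x)f_1(a,x)$; (4-ii) $f_1(ab,x)f_4(a,b)=f_4(a\triangleleft x,b\triangleleft x)f_1(b,x)$; (4-iii) $f_2(ab,x)=f_3(a\triangleleft x,b\triangleleft x)f_2(a,x)+f_4(a\triangleleft x,b\triangleleft x)f_2(b,x)$; (4-$\phi$) $f_1(ab,x)\phi_2(a,b)+\phi_1(ab,x)=f_3(a\triangleleft x,b\triangleleft x)\phi_1(a,x)+f_4(a\triangleleft x,b\triangleleft x)\phi_1(b,x)+\phi_2(a\triangleleft x,b\triangleleft x)$. *)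

From HB Require Import structures.
From mathcomp Require Import all_boot all_algebra.
Set Implicit Arguments. Unset Strict Implicit. Unset Printing Implicit Defensive.
Import GRing.Theory.
Local Open Scope ring_scope.

(* A multiple conjugation quandle X = disjoint union of groups G_l (l : idx).
   The carrier is one type; [grp x] is the index l with x in G_l.
   [gmul] is the group multiplication (only meaningful for elements of the
   same group), [ginv] the inverse in the group of the element, [gone l] the
   identity e_l of G_l, and [qop] the quandle operation (x <| y). *)
Record MCQ := {
  carrier :> Type;
  idx : Type;
  grp : carrier -> idx;
  gmul : carrier -> carrier -> carrier;
  ginv : carrier -> carrier;
  gone : idx -> carrier;
  qop : carrier -> carrier -> carrier;
  grp_gone : forall l, grp (gone l) = l;
  grp_gmul : forall a b, grp a = grp b -> grp (gmul a b) = grp a;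
  grp_ginv : forall a, grp (ginv a) = grp a;
  gmulA : forall a b c, grp a = grp b -> grp b = grp c ->
            gmul (gmul a b) c = gmul a (gmul b c);
  gmul1 : forall a, gmul a (gone (grp a)) = a;
  gmul1l : forall a, gmul (gone (grp a)) a = a;
  gmulV : forall a, gmul a (ginv a) = gone (grp a);
  gmulVl : forall a, gmul (ginv a) a = gone (grp a);
  qop_conj : forall a b, grp a = grp b -> qop a b = gmul (ginv b) (gmul a b);
  qop_e : forall x l, qop x (gone l) = x;
  qop_mul : forall x a b, grp a = grp b -> qop x (gmul a b) = qop (qop x a) b;
  qop_dist : forall x y z, qop (qop x y) z = qop (qop x z) (qop y z);
  qop_grp : forall x a b, grp a = grp b -> grp (qop a x) = grp (qop b x);
  qop_hom : forall x a b, grp a = grp b ->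
            qop (gmul a b) x = gmul (qop a x) (qop b x)
}.

Definition ring_invertible (R : nzRingType) (r : R) : Prop :=
  exists s : R, r * s = 1 /\ s * r = 1.

(* Maps on ⊔_l (G_l × G_l) are represented by total maps X -> X -> _,
   of which only the values on pairs in a common group are ever used. *)
Definition mcq_conditions (X : MCQ) (R : nzRingType) (M : lmodType R)
  (f1 f2 f3 f4 : X -> X -> R) (phi1 phi2 : X -> X -> M) : Prop :=
  let op := @qop X in let mul := @gmul X in let inv := @ginv X in
  let e := @gone X in let g := @grp X in
  (* (0-i) .. (0-phi) *)
  (forall a b c, g a = g b -> g b = g c ->
     [/\ ring_invertible (f3 a b) /\ ring_invertible (f4 a b),
         f3 (mul a b) c * f3 a b = f3 a (mul b c),
         f3 (mul a b) c * f4 a b = f4 a (mul b c) * f3 b c,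
         f4 (mul a b) c = f4 a (mul b c) * f4 b c &
         f3 (mul a b) c *: phi2 a b + phi2 (mul a b) c
           = f4 a (mul b c) *: phi2 b c + phi2 a (mul b c)]) /\
  (* (1-i), (1-ii), (1-phi) *)
  (forall a b, g a = g b ->
     [/\ f1 a b = f4 (inv b) (mul a b) * f3 a b,
         f3 b (mul (inv b) (mul a b)) + f4 b (mul (inv b) (mul a b)) * f2 a b
           = f4 a b &
         f4 b (mul (inv b) (mul a b)) *: phi1 a b
           + phi2 b (mul (inv b) (mul a b)) = phi2 a b]) /\
  (* (2-i), (2-phi i) *)
  (forall x l, f1 x (e l) = 1 /\ f2 x (e l) *: phi2 (e l) (e l) = phi1 x (e l)) /\
  (* (2-ii), (2-iii), (2-iv), (2-phi ii) *)
  (forall x a b, g a = g b ->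
     [/\ f1 x (mul a b) = f1 (op x a) b * f1 x a,
         f2 x (mul a b) * f3 a b = f1 (op x a) b * f2 x a,
         f2 x (mul a b) * f4 a b = f2 (op x a) b &
         f2 x (mul a b) *: phi2 a b + phi1 x (mul a b)
           = f1 (op x a) b *: phi1 x a + phi1 (op x a) b]) /\
  (* (3-i), (3-ii), (3-iii), (3-phi) *)
  (forall x y z,
     [/\ f1 (op x y) z * f1 x y = f1 (op x z) (op y z) * f1 x z,
         f1 (op x y) z * f2 x y = f2 (op x z) (op y z) * f1 y z,
         f2 (op x y) z = f1 (op x z) (op y z) * f2 x z
                          + f2 (op x z) (op y z) * f2 y z &
         f1 (op x y) z *: phi1 x y + phi1 (op x y) z
           = f1 (op x z) (op y z) *: phi1 x z + f2 (op x z) (op y z) *: phi1 y z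
             + phi1 (op x z) (op y z)]) /\
  (* (4-i), (4-ii), (4-iii), (4-phi) *)
  (forall a b x, g a = g b ->
     [/\ f1 (mul a b) x * f3 a b = f3 (op a x) (op b x) * f1 a x,
         f1 (mul a b) x * f4 a b = f4 (op a x) (op b x) * f1 b x,
         f2 (mul a b) x = f3 (op a x) (op b x) * f2 a x
                          + f4 (op a x) (op b x) * f2 b x &
         f1 (mul a b) x *: phi2 a b + phi1 (mul a b) x
           = f3 (op a x) (op b x) *: phi1 a x + f4 (op a x) (op b x) *: phi1 b x
             + phi2 (op a x) (op b x)]).

From mathcomp Require Import all_boot all_algebra.
Import GRing.Theory.
Local Open Scope ring_scope.
Set Implicit Arguments. Unset Strict Implicit.

(* For u in a group G_l put  k u := f3 (u, u^-1)  and  h u := f1 (e_u, u^-1).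
   The cocycle conditions (0-ii), (0-iii) show that k trivializes f3 and
   turns f4 into h:
       k (uv) f3 (u, v) = k u,        k (uv) f4 (u, v) = h u * k v,
   and k u is a two-sided inverse of f3 (e_u, u).  The new tuple multiplies
   f2, phi1, phi2 on the left by k of the corresponding group element
   (x <| y, resp. ab), which replaces f3 by 1 and f4 by h; each new
   condition is then the old one multiplied on the left by k and rewritten
   with the identities above together with (1-i), (2-ii) and (4-i). *)

Section MCQGroups.
Variable X : MCQ.
Implicit Types a b c u v x y : X.

Lemma ginv_unique u v : grp u = grp v -> gmul u v = gone (grp u) -> v = ginv u.
Proof.
move=> huv uv1.
rewrite -[v]gmul1l -huv -(gmulVl u) gmulA ?grp_ginv // uv1.
by rewrite -(grp_ginv u) gmul1.
Qed.

Lemma ginvK a : ginv (ginv a) = a.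
Proof. by apply/esym/ginv_unique; rewrite ?grp_ginv // gmulVl. Qed.

Lemma gone_mul l : gmul (@gone X l) (gone l) = gone l.
Proof. by have := gmul1 (gone l); rewrite grp_gone. Qed.

Lemma ginv_gone l : ginv (@gone X l) = gone l.
Proof. by apply/esym/ginv_unique; rewrite // gone_mul grp_gone. Qed.

Lemma ginvM a b : grp a = grp b -> ginv (gmul a b) = gmul (ginv b) (ginv a).
Proof.
move=> hab; apply/esym/ginv_unique; first by rewrite !grp_gmul ?grp_ginv.
rewrite gmulA ?grp_gmul ?grp_ginv // -(@gmulA _ b) ?grp_ginv // gmulV -hab.
by rewrite -(grp_ginv a) gmul1l grp_ginv gmulV.
Qed.

Lemma gmul_ginvM a b : grp a = grp b -> gmul b (ginv (gmul a b)) = ginv a.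
Proof.
move=> hab; rewrite ginvM // -gmulA ?grp_ginv // gmulV -hab.
by rewrite -(grp_ginv a) gmul1l.
Qed.

Lemma gmulKV b x : grp b = grp x -> gmul b (gmul (ginv b) x) = x.
Proof. by move=> hbx; rewrite -gmulA ?grp_ginv // gmulV hbx gmul1l. Qed.

Lemma gmulVK a b : grp a = grp b -> gmul (ginv a) (gmul a b) = b.
Proof. by move=> hab; rewrite -gmulA ?grp_ginv // gmulVl hab gmul1l. Qed.

(* Acting by x maps identities to identities (the action is a homomorphism
   between groups by (iv), and e e = e). *)
Lemma qop_gone l x : qop (@gone X l) x = gone (grp (qop (gone l) x)).
Proof.
set u := qop (gone l) x.
have uu : gmul u u = u by rewrite /u -qop_hom // gone_mul.
by rewrite -(gmulV u) -{2}uu gmulA ?grp_ginv // gmulV gmul1.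
Qed.

Lemma qop_gone_grp x a : qop (gone (grp x)) a = gone (grp (qop x a)).
Proof. by rewrite qop_gone; congr gone; apply: qop_grp; rewrite grp_gone. Qed.

Lemma qop_gone_same c l : grp c = l -> qop (@gone X l) c = gone l.
Proof. by move=> <-; rewrite qop_conj ?grp_gone // gmul1l gmulVl. Qed.

Lemma qop_ginv a x : qop (ginv a) x = ginv (qop a x).
Proof.
apply: ginv_unique; first by apply: qop_grp; rewrite grp_ginv.
by rewrite -qop_hom ?grp_ginv // gmulV qop_gone_grp.
Qed.
End MCQGroups.

Section TwoSidedUnits.
Variable R : nzRingType.
Implicit Types r s x y : R.

Lemma invertible_rinv r s : ring_invertible r -> s * r = 1 -> r * s = 1.
Proof.
move=> [t [rt _]] sr.
by have -> : s = t by rewrite -[s]mulr1 -rt mulrA sr mul1r.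
Qed.

Lemma invertible_mulIr r x y : ring_invertible r -> x * r = y * r -> x = y.
Proof.
move=> [t [rt _]] xy.
by rewrite -[x]mulr1 -rt mulrA xy -mulrA rt mulr1.
Qed.

Lemma invertible_mul r s :
  ring_invertible r -> ring_invertible s -> ring_invertible (r * s).
Proof.
move=> [t [rt tr]] [u [su us]]; exists (u * t); split.
  by rewrite mulrA -(mulrA r) su mulr1 rt.
by rewrite mulrA -(mulrA u) tr mulr1 us.
Qed.
End TwoSidedUnits.

Section ConditionBlocks.
Variables (X : MCQ) (R : nzRingType) (M : lmodType R).

Definition cocycle_block (f3 f4 : X -> X -> R) (phi2 : X -> X -> M) :=
  forall a b c : X, grp a = grp b -> grp b = grp c ->
  [/\ ring_invertible (f3 a b) /\ ring_invertible (f4 a b),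
      f3 (gmul a b) c * f3 a b = f3 a (gmul b c),
      f3 (gmul a b) c * f4 a b = f4 a (gmul b c) * f3 b c,
      f4 (gmul a b) c = f4 a (gmul b c) * f4 b c &
      f3 (gmul a b) c *: phi2 a b + phi2 (gmul a b) c
        = f4 a (gmul b c) *: phi2 b c + phi2 a (gmul b c)].

Definition conj_block (f1 f2 f3 f4 : X -> X -> R) (phi1 phi2 : X -> X -> M) :=
  forall a b : X, grp a = grp b ->
  [/\ f1 a b = f4 (ginv b) (gmul a b) * f3 a b,
      f3 b (gmul (ginv b) (gmul a b)) + f4 b (gmul (ginv b) (gmul a b)) * f2 a b
        = f4 a b &
      f4 b (gmul (ginv b) (gmul a b)) *: phi1 a b
        + phi2 b (gmul (ginv b) (gmul a b)) = phi2 a b].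

Definition unit_block (f1 f2 : X -> X -> R) (phi1 phi2 : X -> X -> M) :=
  forall (x : X) l,
  f1 x (gone l) = 1 /\ f2 x (gone l) *: phi2 (gone l) (gone l) = phi1 x (gone l).

Definition action_block (f1 f2 f3 f4 : X -> X -> R) (phi1 phi2 : X -> X -> M) :=
  forall x a b : X, grp a = grp b ->
  [/\ f1 x (gmul a b) = f1 (qop x a) b * f1 x a,
      f2 x (gmul a b) * f3 a b = f1 (qop x a) b * f2 x a,
      f2 x (gmul a b) * f4 a b = f2 (qop x a) b &
      f2 x (gmul a b) *: phi2 a b + phi1 x (gmul a b)
        = f1 (qop x a) b *: phi1 x a + phi1 (qop x a) b].

Definition dist_block (f1 f2 : X -> X -> R) (phi1 : X -> X -> M) :=
  forall x y z : X,
  [/\ f1 (qop x y) z * f1 x y = f1 (qop x z) (qop y z) * f1 x z,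
      f1 (qop x y) z * f2 x y = f2 (qop x z) (qop y z) * f1 y z,
      f2 (qop x y) z = f1 (qop x z) (qop y z) * f2 x z
                       + f2 (qop x z) (qop y z) * f2 y z &
      f1 (qop x y) z *: phi1 x y + phi1 (qop x y) z
        = f1 (qop x z) (qop y z) *: phi1 x z + f2 (qop x z) (qop y z) *: phi1 y z
          + phi1 (qop x z) (qop y z)].

Definition hom_block (f1 f2 f3 f4 : X -> X -> R) (phi1 phi2 : X -> X -> M) :=
  forall a b x : X, grp a = grp b ->
  [/\ f1 (gmul a b) x * f3 a b = f3 (qop a x) (qop b x) * f1 a x,
      f1 (gmul a b) x * f4 a b = f4 (qop a x) (qop b x) * f1 b x,
      f2 (gmul a b) x = f3 (qop a x) (qop b x) * f2 a x
                        + f4 (qop a x) (qop b x) * f2 b x &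
      f1 (gmul a b) x *: phi2 a b + phi1 (gmul a b) x
        = f3 (qop a x) (qop b x) *: phi1 a x + f4 (qop a x) (qop b x) *: phi1 b x
          + phi2 (qop a x) (qop b x)].

Lemma mcq_conditionsE (f1 f2 f3 f4 : X -> X -> R) (phi1 phi2 : X -> X -> M) :
  mcq_conditions f1 f2 f3 f4 phi1 phi2 <->
  cocycle_block f3 f4 phi2 /\ conj_block f1 f2 f3 f4 phi1 phi2 /\
  unit_block f1 f2 phi1 phi2 /\ action_block f1 f2 f3 f4 phi1 phi2 /\
  dist_block f1 f2 phi1 /\ hom_block f1 f2 f3 f4 phi1 phi2.
Proof. exact: iff_refl. Qed.
End ConditionBlocks.

Section Normalization.
Variables (X : MCQ) (R : nzRingType) (M : lmodType R)
  (f1 f2 f3 f4 : X -> X -> R) (phi1 phi2 : X -> X -> M).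
Hypothesis Hcocycle : cocycle_block f3 f4 phi2.
Hypothesis Hconj : conj_block f1 f2 f3 f4 phi1 phi2.
Hypothesis Hunit : unit_block f1 f2 phi1 phi2.
Hypothesis Haction : action_block f1 f2 f3 f4 phi1 phi2.
Hypothesis Hdist : dist_block f1 f2 phi1.
Hypothesis Hhom : hom_block f1 f2 f3 f4 phi1 phi2.

Local Notation E x := (@gone X (@grp X x)).
Local Notation k u := (f3 u (@ginv X u)).
Local Notation h u := (f1 (E u) (@ginv X u)).

Definition nf1 (x y : X) : R := f1 (E x) y.
Definition nf2 (x y : X) : R := f3 (qop x y) (qop (ginv x) y) * f2 x y * f3 (E y) y.
Definition nf3 (a b : X) : R := 1.
Definition nf4 (a b : X) : R := h a.
Definition npsi1 (x y : X) : M := f3 (qop x y) (qop (ginv x) y) *: phi1 x y.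
Definition npsi2 (a b : X) : M := f3 (gmul a b) (gmul (ginv b) (ginv a)) *: phi2 a b.

Lemma nf2E x y : nf2 x y = k (qop x y) * f2 x y * f3 (E y) y.
Proof. by rewrite /nf2 qop_ginv. Qed.

Lemma npsi1E x y : npsi1 x y = k (qop x y) *: phi1 x y.
Proof. by rewrite /npsi1 qop_ginv. Qed.

Lemma npsi2E a b : grp a = grp b -> npsi2 a b = k (gmul a b) *: phi2 a b.
Proof. by move=> hab; rewrite /npsi2 ginvM. Qed.

Lemma f3_invertible a b : grp a = grp b -> ring_invertible (f3 a b).
Proof. by move=> hab; case: (Hcocycle hab (erefl (grp b))) => [[]]. Qed.

Lemma f4_invertible a b : grp a = grp b -> ring_invertible (f4 a b).
Proof. by move=> hab; case: (Hcocycle hab (erefl (grp b))) => [[]]. Qed.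

(* (0-ii) at (e, e, e) with f3 (e, e) invertible. *)
Lemma f3_gone l : f3 (@gone X l) (gone l) = 1.
Proof.
have gl : grp (@gone X l) = grp (@gone X l) by [].
case: (Hcocycle gl gl); rewrite gone_mul => _ f3ee _ _ _.
by apply: (invertible_mulIr (f3_invertible gl)); rewrite f3ee mul1r.
Qed.

(* k u is a two-sided inverse of f3 (e, u), by (0-ii) at (e, u, u^-1). *)
Lemma k_f3_gone u : k u * f3 (E u) u = 1.
Proof.
have gEu : grp (E u) = grp u by rewrite grp_gone.
have guv : grp u = grp (ginv u) by rewrite grp_ginv.
by case: (Hcocycle gEu guv); rewrite gmul1l gmulV f3_gone.
Qed.

Lemma f3_gone_k u : f3 (E u) u * k u = 1.
Proof.
by apply: invertible_rinv (k_f3_gone u); apply: f3_invertible; rewrite grp_gone.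
Qed.

(* k trivializes f3 (0-ii at (u, v, (uv)^-1)). *)
Lemma k_f3 u v : grp u = grp v -> k (gmul u v) * f3 u v = k u.
Proof.
move=> huv.
have gv : grp v = grp (ginv (gmul u v)) by rewrite grp_ginv grp_gmul.
by case: (Hcocycle huv gv) => _ -> _ _ _; rewrite gmul_ginvM.
Qed.

(* (1-i) at (e, u^-1) expresses h through f3 and f4. *)
Lemma h_f4_f3 u : h u = f4 u (ginv u) * f3 (E u) (ginv u).
Proof.
have g : grp (E u) = grp (ginv u) by rewrite grp_gone grp_ginv.
by case: (Hconj g) => -> _ _; rewrite ginvK -(grp_ginv u) gmul1l.
Qed.

(* h takes invertible values, as required of the new f4 by (0-i). *)
Lemma h_invertible u : ring_invertible (h u).
Proof.
rewrite h_f4_f3; apply: invertible_mul; [apply: f4_invertible | apply: f3_invertible];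
  by rewrite ?grp_ginv ?grp_gone.
Qed.

(* k transforms f4 into h (0-iii at (u, v, (uv)^-1), 0-ii at (v, v^-1, u^-1)). *)
Lemma k_f4 u v : grp u = grp v -> k (gmul u v) * f4 u v = h u * k v.
Proof.
move=> huv.
have gv : grp v = grp (ginv (gmul u v)) by rewrite grp_ginv grp_gmul.
case: (Hcocycle huv gv) => _ _ -> _ _; rewrite gmul_ginvM // ginvM //.
have gvv : grp v = grp (ginv v) by rewrite grp_ginv.
have gvu : grp (ginv v) = grp (ginv u) by rewrite !grp_ginv.
by case: (Hcocycle gvv gvu) => _ <- _ _ _; rewrite gmulV h_f4_f3 -huv mulrA.
Qed.

(* h is multiplicative, by (2-ii) at e_a. *)
Lemma hM a b : grp a = grp b -> h (gmul a b) = h a * h b.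
Proof.
move=> hab.
have g : grp (ginv b) = grp (ginv a) by rewrite !grp_ginv.
case: (Haction (E a) g) => f1M _ _ _.
by rewrite grp_gmul // ginvM // f1M -hab qop_gone_same ?grp_ginv.
Qed.

(* h relates f4 and f3 (e, .) (0-iii at (a, a^-1, ab), 0-ii at (e, a^-1, ab)). *)
Lemma f3_gone_h a b : grp a = grp b ->
  f3 (E a) (gmul a b) * h a = f4 a b * f3 (E a) b.
Proof.
move=> hab.
have gab : grp (ginv a) = grp (gmul a b) by rewrite grp_ginv grp_gmul.
have ga : grp a = grp (ginv a) by rewrite grp_ginv.
have gEa : grp (E a) = grp (ginv a) by rewrite grp_gone grp_ginv.
case: (Hcocycle ga gab) => _ _ f34 _ _; case: (Hcocycle gEa gab) => _ f33 _ _ _.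
rewrite gmulV in f34; rewrite -(grp_ginv a) gmul1l grp_ginv in f33.
by rewrite h_f4_f3 mulrA f34 -mulrA f33 gmulVK.
Qed.

(* k intertwines f1 (y, z) and f1 (e_y, z), by (4-i) at (y, y^-1, z). *)
Lemma k_f1 y z : k (qop y z) * f1 y z = f1 (E y) z * k y.
Proof.
have g : grp y = grp (ginv y) by rewrite grp_ginv.
by case: (Hhom z g); rewrite gmulV qop_ginv => ->.
Qed.

(* (4-i) at (e_y, y, z). *)
Lemma f1_f3_gone y z :
  f1 y z * f3 (E y) y = f3 (E (qop y z)) (qop y z) * f1 (E y) z.
Proof.
have g : grp (E y) = grp y by rewrite grp_gone.
by case: (Hhom z g); rewrite gmul1l qop_gone_grp.
Qed.

(* (0): f3 = 1 and f4 = h; the phi-condition is (0-phi) scaled by k (abc). *)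
Lemma normalized_cocycle : cocycle_block nf3 nf4 npsi2.
Proof.
move=> a b c gab gbc; rewrite /nf3 /nf4.
have gab_c : grp (gmul a b) = grp c by rewrite grp_gmul // gab.
have ga_bc : grp a = grp (gmul b c) by rewrite grp_gmul.
split; rewrite ?mulr1 ?mul1r ?hM //.
- by split; [exists 1; rewrite mulr1 | exact: h_invertible].
- rewrite !npsi2E // scale1r; case: (Hcocycle gab gbc) => _ _ _ _.
  move/(congr1 ( *:%R (k (gmul (gmul a b) c)))).
  by rewrite !scalerDr !scalerA k_f3 // gmulA // k_f4 // -!scalerA.
Qed.

(* (1): (1-ii) and (1-phi) scaled by k (ab), using ab = b (b^-1 ab). *)
Lemma normalized_conj : conj_block nf1 nf2 nf3 nf4 npsi1 npsi2.
Proof.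
move=> a b gab; rewrite /nf1 /nf3 /nf4 nf2E npsi1E qop_conj //.
case: (Hconj gab) => _ f234 phi12.
set c := gmul (ginv b) (gmul a b) in f234 phi12 *.
have gbc : grp b = grp c by rewrite /c !grp_gmul ?grp_ginv.
have bc_ab : gmul b c = gmul a b by rewrite /c gmulKV // grp_gmul.
split.
- by rewrite mulr1 ginvK grp_ginv gab.
- have f42 : f4 b c * f2 a b = f4 a b - f3 b c.
    by rewrite -f234 (addrC (f3 b c)) addrK.
  rewrite !mulrA -(k_f4 gbc) bc_ab -(mulrA _ (f4 b c)) f42 mulrBr mulrBl.
  rewrite (k_f4 gab) -bc_ab (k_f3 gbc) -!mulrA k_f3_gone mulr1.
  by rewrite addrC subrK.
- by rewrite !npsi2E // -phi12 scalerDr -bc_ab !scalerA (k_f4 gbc).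
Qed.

(* (2-i), (2-phi i): k (e_l) = f3 (e_l, e_l) = 1. *)
Lemma normalized_unit : unit_block nf1 nf2 npsi1 npsi2.
Proof.
move=> x l; rewrite /nf1 nf2E npsi1E; split; first by case: (Hunit (E x) l).
case: (Hunit x l) => _ <-.
by rewrite /npsi2 !qop_e grp_gone ginv_gone gone_mul f3_gone mulr1 scale1r scalerA.
Qed.

(* (2-ii)-(2-phi ii): the old conditions at x and at e_x, scaled by k. *)
Lemma normalized_action : action_block nf1 nf2 nf3 nf4 npsi1 npsi2.
Proof.
move=> x a b gab; rewrite /nf1 /nf3 /nf4 !nf2E !npsi1E (qop_mul x gab).
have gE : E (gmul a b) = E a by rewrite grp_gmul.
case: (Haction x gab) => _ f23 f24 phi12.
split.
- by case: (Haction (E x) gab) => -> _ _ _; rewrite qop_gone_grp.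
- have f3E : f3 (E a) (gmul a b) = f3 a b * f3 (E a) a.
    have g : grp (E a) = grp a by rewrite grp_gone.
    by case: (Hcocycle g gab) => _ <- _ _ _; rewrite gmul1l.
  by rewrite mulr1 gE f3E mulrA -(mulrA _ (f2 x _)) f23 mulrA k_f1 !mulrA.
- by rewrite gE -mulrA (f3_gone_h gab) -f24 -gab !mulrA.
- rewrite npsi2E // scalerA -(mulrA _ (f3 _ _)) f3_gone_k mulr1.
  rewrite -scalerA -scalerDr phi12.
  by rewrite scalerDr scalerA k_f1 -scalerA.
Qed.

(* (3): the old conditions at (x, y, z) and (e_x, y, z), scaled by k. *)
Lemma normalized_dist : dist_block nf1 nf2 npsi1.
Proof.
move=> x y z; rewrite /nf1 !nf2E !npsi1E.
case: (Hdist x y z) => _ f12 f2D phi1D.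
have kf1 := k_f1 (qop x z) (qop y z); rewrite -qop_dist in kf1.
have f3k := f3_gone_k (qop y z).
rewrite -!qop_dist.
split.
- by case: (Hdist (E x) y z); rewrite !qop_gone_grp.
- rewrite !mulrA -(k_f1 (qop x y) z) -(mulrA _ (f1 (qop x y) z)) f12 mulrA.
  by rewrite -(mulrA _ (f1 y z)) f1_f3_gone !mulrA.
- rewrite f2D mulrDr mulrDl !mulrA -kf1.
  by rewrite -(mulrA _ (f3 (E (qop y z)) (qop y z))) f3k mulr1.
- rewrite !scalerA -(k_f1 (qop x y) z) -kf1.
  rewrite -(mulrA _ (f3 (E (qop y z)) (qop y z))) f3k mulr1.
  by rewrite -!scalerA -!scalerDr phi1D.
Qed.

(* (4): (4-iii), (4-phi) scaled by k, and (3-i) at (e_a, a^-1, x). *)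
Lemma normalized_hom : hom_block nf1 nf2 nf3 nf4 npsi1 npsi2.
Proof.
move=> a b x gab; rewrite /nf1 /nf3 /nf4 !nf2E !npsi1E.
have guv : grp (qop a x) = grp (qop b x) := qop_grp x gab.
have gE : E (gmul a b) = E a by rewrite grp_gmul.
case: (Hhom x gab) => _ _ f2M phi12.
have kf1 := k_f1 (gmul a b) x; rewrite (qop_hom x gab) in kf1.
rewrite (qop_hom x gab) npsi2E // npsi2E //.
split.
- by rewrite mulr1 mul1r gE.
- case: (Hdist (E a) (ginv a) x); rewrite qop_gone_same ?grp_ginv //.
  by rewrite qop_gone_grp qop_ginv gE -gab => ->.
- by rewrite f2M mulrDr mulrDl !mulrA (k_f3 guv) (k_f4 guv) mul1r.
- rewrite scale1r scalerA -kf1 -scalerA -scalerDr phi12.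
  by rewrite !scalerDr !scalerA (k_f3 guv) (k_f4 guv).
Qed.
End Normalization.

Unset Implicit Arguments.
Theorem lemma4p2 (X : MCQ) (R : nzRingType) (M : lmodType R)
  (f1 f2 f3 f4 : X -> X -> R) (phi1 phi2 : X -> X -> M) :
  mcq_conditions f1 f2 f3 f4 phi1 phi2 ->
  mcq_conditions
    (fun x y => f1 (@gone X (@grp X x)) y)
    (fun x y => f3 (@qop X x y) (@qop X (@ginv X x) y) * f2 x y
                * f3 (@gone X (@grp X y)) y)
    (fun a b => 1)
    (fun a b => f1 (@gone X (@grp X a)) (@ginv X a))
    (fun x y => f3 (@qop X x y) (@qop X (@ginv X x) y) *: phi1 x y)
    (fun a b => f3 (@gmul X a b) (@gmul X (@ginv X b) (@ginv X a)) *: phi2 a b).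
Proof.
move=> /mcq_conditionsE [Hcocycle [Hconj [Hunit [Haction [Hdist Hhom]]]]].
apply/mcq_conditionsE.
split; [|split; [|split; [|split; [|split]]]].
- exact: (normalized_cocycle Hcocycle Hconj Haction).
- exact: (normalized_conj Hcocycle Hconj).
- exact: (normalized_unit Hcocycle Hunit).
- exact: (normalized_action Hcocycle Hconj Haction Hhom).
- exact: (normalized_dist Hcocycle Hdist Hhom).
- exact: (normalized_hom Hcocycle Hconj Hdist Hhom).
Qed.
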